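(* There exist nonatomic routing games with affine cost functions (i.e., $c_e(x)=t_e+a_ex$ with $t_e,a_e\in\mathbb{R}_+$) that do not admit a non-negative demand-independent optimal toll (DIOT).
   Context: A nonatomic routing game consists of a finite directed multigraph $\mathcal{G}=(\mathcal{V},\mathcal{E})$, a finite set $\mathcal{I}$ of origin-destination pairs $i$ with origin $o^i$ and destination $d^i$, and nondecreasing continuous cost functions $c_e:\mathbb{R}_+\to\mathbb{R}_+$. $\mathcal{P}^i$ is the set of simple $o^i$–$d^i$ paths. For a demand vector $\boldsymbol{\mu}\in\mathbb{R}_+^{\mathcal{I}}$, feasible flows are $\boldsymbol{f}\in\mathbb{R}_+^{\mathcal{P}}$ with $\sum_{p\in\mathcal{P}^i}f_p=\mu^i$; loads $x_e=\sum_{p\ni e}f_p$; path costs $c_p=\sum_{e\in p}c_e(x_e)$. A Wardrop equilibrium is a feasible flow where every used path of each pair $i$ has cost at most that of any other path in $\mathcal{P}^i$. The total cost is $L(\boldsymbol{f})=\sum_p f_pc_p(\boldsymbol{f})$; a system optimum minimizes $L$ over feasible flows. For a toll vector $\boldsymbol{\tau}\in\mathbb{R}^{\mathcal{E}}$, the tolled game has edge costs $c_e(x)+\tau_e$. $\boldsymbol{\tau}$ is a DIOT if for every demand vector $\boldsymbol{\mu}\in\mathbb{R}_+^{\mathcal{I}}$ every Wardrop equilibrium of the tolled game with demand $\boldsymbol{\mu}$ is a system optimum of the untolled game for demand $\boldsymbol{\mu}$. It is non-negative if $\tau_e\ge0$ for all $e$. *)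

From HB Require Import structures.
From mathcomp Require Import all_boot all_order all_algebra.
From Stdlib Require Import Rdefinitions.
From mathcomp Require Import Rstruct.
Set Implicit Arguments. Unset Strict Implicit. Unset Printing Implicit Defensive.
Import Order.TTheory GRing.Theory Num.Theory.
Local Open Scope ring_scope.

Section Routing.
Variables (V E I : finType) (src dst : E -> V) (o d : I -> V).

Fixpoint is_walk (u v : V) (p : seq E) : bool :=
  if p is e :: p' then (src e == u) && is_walk (dst e) v p' else u == v.

Definition is_simple_path (u v : V) (p : seq E) : bool :=
  is_walk u v p && uniq (u :: [seq dst e | e <- p]).

Fixpoint seqs_upto (n : nat) : seq (seq E) :=
  if n is n'.+1 then [::] :: [seq e :: p | e <- enum E, p <- seqs_upto n']
  else [:: [::]].

(* P^i : the simple o^i-d^i paths (they have at most #|V| - 1 edges) *)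
Definition paths (i : I) : seq (seq E) :=
  [seq p <- seqs_upto #|V| | is_simple_path (o i) (d i) p].

(* a path flow: f i p is the flow of pair i on path p (only p \in paths i matters) *)
Definition feasible (mu : I -> R) (f : I -> seq E -> R) : Prop :=
  forall i, (forall p, p \in paths i -> 0 <= f i p) /\
            \sum_(p <- paths i) f i p = mu i.

Definition load (f : I -> seq E -> R) (e : E) : R :=
  \sum_i \sum_(p <- paths i | e \in p) f i p.

Definition path_cost (c : E -> R -> R) (f : I -> seq E -> R) (p : seq E) : R :=
  \sum_(e <- p) c e (load f e).

Definition wardrop (c : E -> R -> R) (mu : I -> R) (f : I -> seq E -> R) : Prop :=
  feasible mu f /\
  forall i p q, p \in paths i -> q \in paths i -> 0 < f i p ->
    path_cost c f p <= path_cost c f q.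

Definition total_cost (c : E -> R -> R) (f : I -> seq E -> R) : R :=
  \sum_i \sum_(p <- paths i) f i p * path_cost c f p.

Definition system_optimum (c : E -> R -> R) (mu : I -> R) (f : I -> seq E -> R) : Prop :=
  feasible mu f /\ forall g, feasible mu g -> total_cost c f <= total_cost c g.

Definition is_DIOT (c : E -> R -> R) (tau : E -> R) : Prop :=
  forall mu : I -> R, (forall i, 0 <= mu i) ->
  forall f, wardrop (fun e x => c e x + tau e) mu f -> system_optimum c mu f.

End Routing.

From Pilot Require Import Defs.
From HB Require Import structures.
From mathcomp Require Import all_boot all_order all_algebra.
From Stdlib Require Import Rdefinitions.
From mathcomp Require Import Rstruct ring lra.
Import Order.TTheory GRing.Theory Num.Theory.
Local Open Scope ring_scope.
(* Otherwise Stdlib's binding of R_scope to R would parse arguments and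
   bodies of type R with Rplus, Rmult and IZR numerals. *)
#[local] Bind Scope ring_scope with R.

(* In the network with edges U -> V and U -> W of cost x and V -> W and
   W -> V of cost 1, each of the commodities U -> W and U -> V has a slow
   route (through a constant-cost edge) and a fast one.  Sending s on the
   slow and f on the fast route costs s (s + 1) + f^2, which is optimal
   exactly when f - s = 1/2, whereas in a tolled equilibrium using both
   routes f - s = 1 + (toll of slow) - (toll of fast).  A DIOT must thus
   make both toll gaps 1/2, yet they add up to 2 plus the tolls on V -> W
   and W -> V. *)

Section TolledCost.
Variables (V E I : finType) (src dst : E -> V) (o d : I -> V).

Lemma path_cost_tolled (c : E -> R -> R) (tau : E -> R) f p :
  path_cost src dst o d (fun e x => c e x + tau e) f p =
  path_cost src dst o d c f p + \sum_(e <- p) tau e.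
Proof. exact: big_split. Qed.

End TolledCost.

Inductive vertex := U | V | W.

Definition vertex_ord (x : vertex) : 'I_3 :=
  match x with U => @Ordinal 3 0 isT | V => @Ordinal 3 1 isT | W => @Ordinal 3 2 isT end.
Definition ord_vertex (i : 'I_3) : vertex :=
  match val i with 0 => U | 1 => V | _ => W end.
Lemma vertex_ordK : cancel vertex_ord ord_vertex. Proof. by case. Qed.
HB.instance Definition _ := Countable.copy vertex (can_type vertex_ordK).
Lemma vertex_enumP : Finite.axiom [:: U; V; W]. Proof. by case. Qed.
HB.instance Definition _ := isFinite.Build vertex vertex_enumP.

Inductive edge := eUV | eVW | eUW | eWV.

Definition edge_ord (e : edge) : 'I_4 :=
  match e with
  | eUV => @Ordinal 4 0 isT | eVW => @Ordinal 4 1 isT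
  | eUW => @Ordinal 4 2 isT | eWV => @Ordinal 4 3 isT
  end.
Definition ord_edge (i : 'I_4) : edge :=
  match val i with 0 => eUV | 1 => eVW | 2 => eUW | _ => eWV end.
Lemma edge_ordK : cancel edge_ord ord_edge. Proof. by case. Qed.
HB.instance Definition _ := Countable.copy edge (can_type edge_ordK).
Lemma edge_enumP : Finite.axiom [:: eUV; eVW; eUW; eWV]. Proof. by case. Qed.
HB.instance Definition _ := isFinite.Build edge edge_enumP.

Inductive commodity := UW | UV.

Definition commodity_ord (i : commodity) : 'I_2 :=
  match i with UW => @Ordinal 2 0 isT | UV => @Ordinal 2 1 isT end.
Definition ord_commodity (i : 'I_2) : commodity :=
  match val i with 0 => UW | _ => UV end.
Lemma commodity_ordK : cancel commodity_ord ord_commodity. Proof. by case. Qed.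
HB.instance Definition _ := Countable.copy commodity (can_type commodity_ordK).
Lemma commodity_enumP : Finite.axiom [:: UW; UV]. Proof. by case. Qed.
HB.instance Definition _ := isFinite.Build commodity commodity_enumP.

Definition src (e : edge) : vertex :=
  match e with eUV | eUW => U | eVW => V | eWV => W end.
Definition dst (e : edge) : vertex :=
  match e with eUV | eWV => V | eVW | eUW => W end.
Definition orig (i : commodity) : vertex := U.
Definition dest (i : commodity) : vertex := if i is UW then W else V.

Definition free_flow_time (e : edge) : R := match e with eVW | eWV => 1 | _ => 0 end.
Definition slope (e : edge) : R := match e with eUV | eUW => 1 | _ => 0 end.
Definition cost (e : edge) (x : R) : R := free_flow_time e + slope e * x.

Section Network.

Local Notation paths := (paths src dst orig dest).
Local Notation feasible := (feasible src dst orig dest).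
Local Notation load := (load src dst orig dest).
Local Notation path_cost := (path_cost src dst orig dest).
Local Notation total_cost := (total_cost src dst orig dest).
Local Notation wardrop := (wardrop src dst orig dest).
Local Notation system_optimum := (system_optimum src dst orig dest).
Local Notation is_DIOT := (is_DIOT src dst orig dest).

Definition slow (i : commodity) : seq edge :=
  if i is UW then [:: eUV; eVW] else [:: eUW; eWV].
Definition fast (i : commodity) : seq edge :=
  if i is UW then [:: eUW] else [:: eUV].

Lemma card_vertex : #|(vertex : finType)| = 3.
Proof. by rewrite cardT enumT unlock. Qed.

Lemma enum_edge : enum (edge : finType) = [:: eUV; eVW; eUW; eWV].
Proof. by rewrite enumT unlock. Qed.

(* The enumeration order of [paths] differs between the two commodities. *)
Lemma paths_perm i : perm_eq (paths i) [:: slow i; fast i].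
Proof.
by rewrite /Defs.paths card_vertex /= enum_edge; apply/eqP; case: i; vm_compute.
Qed.

Lemma sum_commodity (F : commodity -> R) : \sum_i F i = F UW + F UV.
Proof. by rewrite [index_enum _]unlock Finite.enum.unlock big_cons big_seq1. Qed.

Lemma sum_paths i (F : seq edge -> R) : \sum_(p <- paths i) F p = F (slow i) + F (fast i).
Proof. by rewrite (perm_big _ (paths_perm i)) big_cons big_seq1. Qed.

Definition route_demand (i : commodity) (m : R) (j : commodity) :=
  if j == i then m else 0.

Definition route_flow (i : commodity) (s f : R) (j : commodity) (p : seq edge) :=
  if j == i then (if p == slow i then s else if p == fast i then f else 0) else 0.

Lemma route_flowE i s f :
  route_flow i s f i (slow i) = s /\ route_flow i s f i (fast i) = f.
Proof. by case: i. Qed.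

Lemma route_flow_other i s f j p : j != i -> route_flow i s f j p = 0.
Proof. by rewrite /route_flow => /negbTE ->. Qed.

Lemma feasible_route_flow i (s f m : R) :
  0 <= s -> 0 <= f -> s + f = m -> feasible (route_demand i m) (route_flow i s f).
Proof.
move=> s_ge0 f_ge0 sf_m j; rewrite /route_demand.
have [-> | ji] := eqVneq j i; last first.
  split=> [p _|]; first by rewrite route_flow_other.
  by apply: big1 => p _; apply: route_flow_other.
have [fs ff] := route_flowE i s f.
split=> [p|]; last by rewrite sum_paths fs ff.
by rewrite (perm_mem (paths_perm i)) !inE => /orP[] /eqP ->; rewrite ?fs ?ff.
Qed.

Lemma load_route_flow i s f e :
  load (route_flow i s f) e = s *+ (e \in slow i) + f *+ (e \in fast i).
Proof.
rewrite /Defs.load sum_commodity !(perm_big _ (paths_perm _)) !big_cons !big_nil /=.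
by case: i; case: e; rewrite /route_flow /= !(addr0, add0r, mulr1n, mulr0n).
Qed.

Lemma path_cost_route_flow i s f :
  path_cost cost (route_flow i s f) (slow i) = s + 1 /\
  path_cost cost (route_flow i s f) (fast i) = f.
Proof.
rewrite /Defs.path_cost; case: i; rewrite !big_cons !big_nil !load_route_flow /cost /=;
  by split; rewrite !(mulr1n, mulr0n, addr0, add0r, mul1r, mul0r) // addrC.
Qed.

Definition split_cost (s f : R) := s * (s + 1) + f * f.

Lemma total_cost_route_flow i s f :
  total_cost cost (route_flow i s f) = split_cost s f.
Proof.
rewrite /Defs.total_cost (bigD1 i) //= [X in _ + X]big1 => [|j ji]; last first.
  by apply: big1 => p _; rewrite route_flow_other ?mul0r.
rewrite sum_paths addr0.
by have [-> ->] := route_flowE i s f; have [-> ->] := path_cost_route_flow i s f.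
Qed.

Lemma split_cost_excess s f :
  split_cost s f =
  split_cost ((s + f - 1 / 2) / 2) ((s + f + 1 / 2) / 2) + (f - s - 1 / 2) ^+ 2 / 2.
Proof. by rewrite /split_cost; field. Qed.

Lemma optimal_route_split {i} {s f : R} :
  0 <= s -> 0 <= f -> 1 / 2 <= s + f ->
  system_optimum cost (route_demand i (s + f)) (route_flow i s f) -> f - s = 1 / 2.
Proof.
move=> s_ge0 f_ge0 half_le_sf [_ opt].
have balanced : feasible (route_demand i (s + f))
    (route_flow i ((s + f - 1 / 2) / 2) ((s + f + 1 / 2) / 2)).
  by apply: feasible_route_flow; lra.
have := opt _ balanced; rewrite !total_cost_route_flow [leLHS]split_cost_excess.
rewrite gerDl pmulr_lle0 ?invr_gt0 ?ltr0n // => sqr_le0.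
by apply/eqP; rewrite -subr_eq0 -sqrf_eq0 eq_le sqr_ge0 sqr_le0.
Qed.

Definition toll_gap (tau : edge -> R) (i : commodity) :=
  1 + \sum_(e <- slow i) tau e - \sum_(e <- fast i) tau e.

Lemma wardrop_route_flow {tau i} {s f : R} :
  0 <= s -> 0 <= f -> f - s = toll_gap tau i ->
  wardrop (fun e x => cost e x + tau e) (route_demand i (s + f)) (route_flow i s f).
Proof.
move=> s_ge0 f_ge0 gap; split; first exact: feasible_route_flow.
move=> j p q; rewrite !(perm_mem (paths_perm j)) !inE.
have [-> | ji] := eqVneq j i; last by rewrite route_flow_other ?ltxx.
have [pc_slow pc_fast] := path_cost_route_flow i s f.
move: gap; rewrite /toll_gap => gap.
by move=> /orP[]/eqP-> /orP[]/eqP-> _; rewrite !path_cost_tolled ?pc_slow ?pc_fast; lra.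
Qed.

Lemma DIOT_toll_gap {tau} : is_DIOT cost tau -> forall i, toll_gap tau i = 1 / 2.
Proof.
move=> diot i; set g := toll_gap tau i.
have g_le := ler_norm g; have Ng_le := ler_norm (- g); rewrite normrN in Ng_le.
pose s : R := (`|g| + 1 - g) / 2; pose f : R := (`|g| + 1 + g) / 2.
have s_ge0 : 0 <= s by rewrite /s; lra.
have f_ge0 : 0 <= f by rewrite /f; lra.
have gap : f - s = g by rewrite /s /f; lra.
have demand_ge0 j : 0 <= route_demand i (s + f) j.
  by rewrite /route_demand; case: eqP => _; lra.
rewrite -gap; apply: (optimal_route_split s_ge0 f_ge0); first by rewrite /s /f; lra.
exact: diot _ demand_ge0 _ (wardrop_route_flow s_ge0 f_ge0 gap).
Qed.

Lemma toll_gap_sum tau : toll_gap tau UW + toll_gap tau UV = 2 + tau eVW + tau eWV.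
Proof. by rewrite /toll_gap /= !big_cons !big_nil; ring. Qed.

End Network.

Theorem proposition8 :
  exists (V E I : finType) (src dst : E -> V) (o d : I -> V) (t a : E -> R),
    (forall e, 0 <= t e /\ 0 <= a e) /\
    ~ (exists tau : E -> R, (forall e, 0 <= tau e) /\
         is_DIOT src dst o d (fun e x => t e + a e * x) tau).
Proof.
exists vertex, edge, commodity, src, dst, orig, dest, free_flow_time, slope.
split=> [e | [tau [tau_ge0 diot]]]; first by case: e; rewrite /= ler01 lexx.
have := toll_gap_sum tau; rewrite !(DIOT_toll_gap diot).
have := tau_ge0 eVW; have := tau_ge0 eWV; lra.
Qed.
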